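(* Let $0<e\le1$. For all $\sigma,k\in\mathbb{R}^3$ with $|\sigma|=|k|=1$ and all $z\in\mathbb{R}^3$, $$\big|P_{\sigma',k'}(z)-P_{k,\sigma}(z)\big|\le 2\,\frac{1-e}{e}\,|z|,$$ where $k'=\frac{(1-e)k+(1+e)\sigma}{\sqrt{2(1+e^2)+2(1-e^2)k\cdot\sigma}}$ and $\sigma'=\frac{(1+e)k+(1-e)\sigma}{\sqrt{2(1+e^2)+2(1-e^2)k\cdot\sigma}}$.
   Context: For vectors $a,b\in\mathbb{R}^3$, $P_{a,b}$ denotes the linear map $P_{a,b}(x)=(a\cdot x)\,b+(b\cdot a)\,x-(b\cdot x)\,a$. *)

From Stdlib Require Import Reals.
Open Scope R_scope.

Record vec3 : Type := V3 { v1 : R ; v2 : R ; v3 : R }.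

Definition vadd (a b : vec3) : vec3 := V3 (v1 a + v1 b) (v2 a + v2 b) (v3 a + v3 b).
Definition vsub (a b : vec3) : vec3 := V3 (v1 a - v1 b) (v2 a - v2 b) (v3 a - v3 b).
Definition vscale (c : R) (a : vec3) : vec3 := V3 (c * v1 a) (c * v2 a) (c * v3 a).
Definition dot (a b : vec3) : R := v1 a * v1 b + v2 a * v2 b + v3 a * v3 b.
Definition vnorm (a : vec3) : R := sqrt (dot a a).

Definition P (a b x : vec3) : vec3 :=
  vsub (vadd (vscale (dot a x) b) (vscale (dot b a) x)) (vscale (dot b x) a).

Definition denom (e : R) (k sigma : vec3) : R :=
  sqrt (2 * (1 + e ^ 2) + 2 * (1 - e ^ 2) * dot k sigma).

Definition kprime (e : R) (k sigma : vec3) : vec3 :=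
  vscale (/ denom e k sigma) (vadd (vscale (1 - e) k) (vscale (1 + e) sigma)).

Definition sigmaprime (e : R) (k sigma : vec3) : vec3 :=
  vscale (/ denom e k sigma) (vadd (vscale (1 + e) k) (vscale (1 - e) sigma)).

From Stdlib Require Import Reals Lra Psatz.
Open Scope R_scope.

(* Write c = k.sigma, D = 2(1+e^2) + 2(1-e^2)c (so that the
   normalising denominator is sqrt D) and q = 1/D.  A direct expansion shows
     P_{sigma',k'}(z) - P_{k,sigma}(z) = a w + b z,
   where w = (k.z) sigma - (sigma.z) k, a = 4eq - 1 = q(4e - D) and
   b = q(2(1-e^2) + 2(1+e^2)c) - c = 2q(1-e^2)(1-c^2).
   Since w is orthogonal to z, |a w + b z|^2 = a^2 |w|^2 + b^2 |z|^2, and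
   Lagrange's identity gives |w|^2 <= (1-c^2)|z|^2.  The polynomial identity
   (4e - D)^2 + 4(1-e^2)^2(1-c^2) = 4(1-e)^2 D then reduces the bound to
   4(1-e)^2 (1-c^2) q |z|^2, and (1-c^2) e^2 <= D finishes the proof. *)

Ltac vec3_ring :=
  repeat match goal with v : vec3 |- _ => destruct v end;
  unfold P, vsub, vadd, vscale, dot; cbn;
  lazymatch goal with |- @eq vec3 _ _ => f_equal | _ => idtac end; ring.

Lemma dot_self_nonneg (a : vec3) : 0 <= dot a a.
Proof. destruct a; unfold dot; cbn; nra. Qed.

Lemma dot_unit (a : vec3) : vnorm a = 1 -> dot a a = 1.
Proof.
  unfold vnorm; intro h.
  rewrite <- (sqrt_sqrt (dot a a)) by apply dot_self_nonneg.
  rewrite h; ring.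
Qed.

Lemma unit_dot_range (k s : vec3) :
  dot k k = 1 -> dot s s = 1 -> -1 <= dot k s <= 1.
Proof.
  intros hk hs.
  assert (hminus : dot (vsub k s) (vsub k s) = dot k k + dot s s - 2 * dot k s)
    by vec3_ring.
  assert (hplus : dot (vadd k s) (vadd k s) = dot k k + dot s s + 2 * dot k s)
    by vec3_ring.
  pose proof (dot_self_nonneg (vsub k s)); pose proof (dot_self_nonneg (vadd k s)).
  lra.
Qed.

(* The vector w = (k.z) s - (s.z) k, i.e. z acted on by the rotation
   generator of the plane spanned by k and s. *)
Definition wedge (k s z : vec3) : vec3 :=
  vsub (vscale (dot k z) s) (vscale (dot s z) k).

Lemma P_difference_decomp (e d : R) (s k z : vec3) :
  vsub (P (vscale d (vadd (vscale (1 + e) k) (vscale (1 - e) s)))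
          (vscale d (vadd (vscale (1 - e) k) (vscale (1 + e) s))) z) (P k s z)
  = vadd (vscale (4 * e * d ^ 2 - 1) (wedge k s z))
         (vscale (d ^ 2 * ((1 - e ^ 2) * (dot k k + dot s s) + 2 * (1 + e ^ 2) * dot k s)
                  - dot k s) z).
Proof. unfold wedge; vec3_ring. Qed.

Lemma wedge_orthogonal (k s z : vec3) : dot (wedge k s z) z = 0.
Proof. unfold wedge; vec3_ring. Qed.

Lemma dot_orthogonal_combination (a b : R) (u v : vec3) :
  dot u v = 0 ->
  dot (vadd (vscale a u) (vscale b v)) (vadd (vscale a u) (vscale b v))
  = a ^ 2 * dot u u + b ^ 2 * dot v v.
Proof.
  intro huv.
  assert (E : dot (vadd (vscale a u) (vscale b v)) (vadd (vscale a u) (vscale b v))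
              = a ^ 2 * dot u u + b ^ 2 * dot v v + 2 * a * b * dot u v) by vec3_ring.
  rewrite E, huv; ring.
Qed.

Lemma wedge_norm_bound (k s z : vec3) :
  dot (wedge k s z) (wedge k s z) <= (dot k k * dot s s - dot k s ^ 2) * dot z z.
Proof.
  set (det := (v2 k * v3 s - v3 k * v2 s) * v1 z + (v3 k * v1 s - v1 k * v3 s) * v2 z
              + (v1 k * v2 s - v2 k * v1 s) * v3 z).
  assert (lagrange : dot (wedge k s z) (wedge k s z)
                     = (dot k k * dot s s - dot k s ^ 2) * dot z z - det ^ 2)
    by (unfold det, wedge; vec3_ring).
  rewrite lagrange; nra.
Qed.

Definition denom_sq (e c : R) : R := 2 * (1 + e ^ 2) + 2 * (1 - e ^ 2) * c.

Lemma denom_sq_pos (e c : R) :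
  0 < e -> e <= 1 -> -1 <= c -> 0 < denom_sq e c.
Proof.
  intros he0 he1 hc; unfold denom_sq.
  assert (0 <= (1 + c) * (1 - e ^ 2)) by (apply Rmult_le_pos; nra).
  nra.
Qed.

Lemma denom_sq_lower (e c : R) : -1 <= c -> e ^ 2 * (1 - c ^ 2) <= denom_sq e c.
Proof.
  intro hc; unfold denom_sq.
  assert (E : 2 * (1 + e ^ 2) + 2 * (1 - e ^ 2) * c - e ^ 2 * (1 - c ^ 2)
              = 2 * (1 + c) + e ^ 2 * (1 - c) ^ 2) by ring.
  assert (0 <= e ^ 2 * (1 - c) ^ 2) by (apply Rmult_le_pos; apply pow2_ge_0).
  lra.
Qed.

Lemma inv_denom_sq (e : R) (k s : vec3) :
  0 < denom_sq e (dot k s) -> (/ denom e k s) ^ 2 * denom_sq e (dot k s) = 1.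
Proof.
  intro hD.
  unfold denom; fold (denom_sq e (dot k s)).
  rewrite pow_inv, <- Rsqr_pow2, Rsqr_sqrt by lra.
  field; lra.
Qed.

(* The scalar heart of the estimate: with q = 1/D, the squared norm
   a^2 W + b^2 Z of the difference is at most (2(1-e)/e)^2 Z whenever the
   wedge part satisfies W <= (1 - c^2) Z. *)
Lemma coefficient_bound (e c q W Z : R) :
  0 < e -> e <= 1 -> -1 <= c -> q * denom_sq e c = 1 ->
  0 <= Z -> 0 <= W <= (1 - c ^ 2) * Z ->
  (4 * e * q - 1) ^ 2 * W
  + (q * ((1 - e ^ 2) * 2 + 2 * (1 + e ^ 2) * c) - c) ^ 2 * Z
  <= (2 * ((1 - e) / e)) ^ 2 * Z.
Proof.
  intros he0 he1 hc hq hZ [hW0 hW].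
  set (D := denom_sq e c) in *.
  assert (hD : 0 < D) by (apply denom_sq_pos; lra).
  assert (hq0 : 0 < q) by nra.
  assert (ha : 4 * e * q - 1 = q * (4 * e - D)) by (rewrite <- hq; ring).
  assert (hb : q * ((1 - e ^ 2) * 2 + 2 * (1 + e ^ 2) * c) - c
               = q * (2 * (1 - e ^ 2) * (1 - c ^ 2))).
  { transitivity (q * ((1 - e ^ 2) * 2 + 2 * (1 + e ^ 2) * c) - c * (q * D));
      [rewrite hq; ring | unfold D, denom_sq; ring]. }
  (* (4e - D)^2 + 4(1-e^2)^2(1-c^2) = 4(1-e)^2 D, scaled by q^2 = 1/D^2. *)
  assert (key : (q * (4 * e - D)) ^ 2 * (1 - c ^ 2)
                + (q * (2 * (1 - e ^ 2) * (1 - c ^ 2))) ^ 2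
                = 4 * (1 - e) ^ 2 * (1 - c ^ 2) * q).
  { transitivity (4 * (1 - e) ^ 2 * (1 - c ^ 2) * q * (q * D));
      [unfold D, denom_sq; ring | rewrite hq; ring]. }
  (* (1 - c^2) q <= 1/e^2, from e^2 (1 - c^2) <= D. *)
  assert (hqe : 4 * (1 - e) ^ 2 * (1 - c ^ 2) * q <= (2 * ((1 - e) / e)) ^ 2).
  { assert (hlow := denom_sq_lower e c hc); fold D in hlow.
    apply (Rmult_le_reg_r (e ^ 2 * D)); [nra|].
    replace (4 * (1 - e) ^ 2 * (1 - c ^ 2) * q * (e ^ 2 * D))
      with (4 * (1 - e) ^ 2 * (e ^ 2 * (1 - c ^ 2)) * (q * D)) by ring.
    replace ((2 * ((1 - e) / e)) ^ 2 * (e ^ 2 * D)) with (4 * (1 - e) ^ 2 * D)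
      by (field; lra).
    rewrite hq, Rmult_1_r.
    apply Rmult_le_compat_l; [nra | exact hlow]. }
  rewrite ha, hb.
  assert (0 <= (q * (4 * e - D)) ^ 2) by apply pow2_ge_0.
  nra.
Qed.

Lemma sqrt_le_scaled (X M Z : R) :
  0 <= M -> 0 <= Z -> X <= M ^ 2 * Z -> sqrt X <= M * sqrt Z.
Proof.
  intros hM hZ hX.
  rewrite <- (sqrt_pow2 M hM), <- sqrt_mult by (apply pow2_ge_0 || lra).
  apply sqrt_le_1_alt; exact hX.
Qed.

Theorem lemma2p5 (e : R) (he0 : 0 < e) (he1 : e <= 1)
  (sigma k z : vec3) (hs : vnorm sigma = 1) (hk : vnorm k = 1) :
  vnorm (vsub (P (sigmaprime e k sigma) (kprime e k sigma) z) (P k sigma z))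
    <= 2 * ((1 - e) / e) * vnorm z.
Proof.
  apply dot_unit in hs; apply dot_unit in hk.
  pose proof (unit_dot_range k sigma hk hs) as hc.
  assert (hD : 0 < denom_sq e (dot k sigma)) by (apply denom_sq_pos; lra).
  unfold sigmaprime, kprime, vnorm.
  rewrite P_difference_decomp, hk, hs.
  rewrite dot_orthogonal_combination by apply wedge_orthogonal.
  apply sqrt_le_scaled.
  - apply Rmult_le_pos; [lra | apply Rmult_le_pos; [lra | left; apply Rinv_0_lt_compat; lra]].
  - apply dot_self_nonneg.
  - replace (1 + 1) with 2 by ring.
    apply coefficient_bound; try lra.
    + apply inv_denom_sq; exact hD.
    + apply dot_self_nonneg.
    + split; [apply dot_self_nonneg|].
      pose proof (wedge_norm_bound k sigma z) as hw.
      rewrite hk, hs, Rmult_1_l in hw; exact hw.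
Qed.
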